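(* Let $\mathcal{T}=(V,A,E,f,q,v_0)$ be a decorated rooted tree and let $v,w\in V$ be such that $v<w$ or $w<v$. If $\mathcal{T}$ has negative determinants then $\det(\gamma_{v,w})<0$; if $\mathcal{T}$ has positive determinants then $\det(\gamma_{v,w})>0$.
   Context: A graph is a pair $(X_0,X_1)$ of finite sets such that each element of $X_1$ (an edge) is a $2$-element subset of $X_0$; elements of $X_0$ are cells. A path is a tuple $(x_0,\dots,x_n)$ ($n\ge0$) of cells with $\{x_i,x_{i+1}\}$ an edge for each $i<n$, these edges pairwise distinct; a cell/edge is in the path if it is some $x_i$ / some $\{x_i,x_{i+1}\}$. The graph is a tree if any two cells $x,y$ are joined by a unique path $\gamma_{x,y}$. A decorated tree is $(V,A,E,f,q)$ with $V$ (vertices), $A$ (arrows) finite disjoint sets, $(V\cup A,E)$ a tree, every arrow contained in exactly one edge, $f:A\to\mathbb{Z}$, $q(e,x)\in\mathbb{Z}$ for each $e\in E$, $x\in e$, with $q(e,\alpha)=1$ for $\alpha\in A$, and for each $v\in V$ and distinct edges $e,e'\ni v$, $\gcd(q(e,v),q(e',v))=1$. For $x\in V\cup A$, $e\ni x$: $Q(e,x)=\prod q(e',x)$ over edges $e'\ne e$ containing $x$ (empty product $=1$); for an edge $e=\{x,y\}$, $\det(e)=q(e,x)q(e,y)-Q(e,x)Q(e,y)$. For a path $\gamma=(x_0,\dots,x_n)$ with $n>0$: $q(\gamma,x_0)=q(\{x_0,x_1\},x_0)$, $q(\gamma,x_n)=q(\{x_{n-1},x_n\},x_n)$; for a cell $u$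 of $\gamma$, $Q(\gamma,u)=\prod q(\varepsilon,u)$ over edges $\varepsilon\ni u$ not in $\gamma$; $Q^*(\gamma)=\prod_{0<i<n}Q(\gamma,x_i)$; and $\det(\gamma)=q(\gamma,x_0)q(\gamma,x_n)-Q^*(\gamma)^2Q(\gamma,x_0)Q(\gamma,x_n)$. A root of $(V,A,E,f,q)$ is a vertex $v_0$ with $q(e,v_0)=1$ for every edge $e\ni v_0$ such that for every $v\in V\setminus\{v_0\}$, all edges $e\ni v$ not in $\gamma_{v_0,v}$ satisfy $q(e,v)\ge1$ and at most one of them satisfies $q(e,v)\ne1$. A decorated rooted tree is $(V,A,E,f,q,v_0)$ with $v_0$ a root. For distinct $x,y\in V\cup A$, $x<y$ means $x$ is in $\gamma_{v_0,y}$. $\mathcal{T}$ has negative (resp. positive) determinants if $\det(e)<0$ (resp. $>0$) for every edge $e=\{x,y\}$ with $x,y\in V$. *)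

From HB Require Import structures.
From mathcomp Require Import all_boot all_order all_algebra.
Set Implicit Arguments. Unset Strict Implicit. Unset Printing Implicit Defensive.
Import Order.TTheory GRing.Theory Num.Theory.
Local Open Scope ring_scope.

(* Cells are the elements of a finite type T; edges are 2-element subsets of T.
   A path (x_0,...,x_n) is a nonempty sequence of cells. *)
Section DecoratedTrees.
Variable T : finType.
Variable E : {set {set T}}.

Definition path_edges (p : seq T) : seq {set T} :=
  [seq [set xy.1; xy.2] | xy <- zip p (behead p)].

Definition is_path (p : seq T) : Prop :=
  p <> [::] /\ all (fun e => e \in E) (path_edges p) /\ uniq (path_edges p).

Definition path_between (x y : T) (p : seq T) : Prop :=
  is_path p /\ head x p = x /\ last x p = y.

Definition is_tree : Prop :=
  forall x y : T, exists! p : seq T, path_between x y p.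

Variable q : {set T} -> T -> int.

Definition Qe (e : {set T}) (x : T) : int :=
  \prod_(e' in E | (x \in e') && (e' != e)) q e' x.

Definition det_edge (x y : T) : int :=
  q [set x; y] x * q [set x; y] y - Qe [set x; y] x * Qe [set x; y] y.

Definition Qpath (p : seq T) (u : T) : int :=
  \prod_(e in E | (u \in e) && (e \notin path_edges p)) q e u.

Definition interior (p : seq T) : seq T := take (size p - 2)%N (drop 1 p).

Definition Qstar (p : seq T) : int := \prod_(u <- interior p) Qpath p u.

Definition det_path (x0 : T) (p : seq T) : int :=
  let n := (size p).-1 in
  let a := nth x0 p 0 in
  let b := nth x0 p n in
  q [set a; nth x0 p 1] a * q [set nth x0 p n.-1; b] b
  - Qstar p ^+ 2 * Qpath p a * Qpath p b.

Variables (V A : {set T}) (f : T -> int).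

Definition decorated_tree : Prop :=
  [disjoint V & A] /\ V :|: A = setT /\
      (forall e, e \in E -> #|e| = 2%N) /\
      is_tree /\
      (forall a, a \in A -> #|[set e in E | a \in e]| = 1%N) /\
      (forall e a, e \in E -> a \in A -> a \in e -> q e a = 1) /\
      (forall v e e', v \in V -> e \in E -> e' \in E -> v \in e -> v \in e' ->
         e != e' -> coprimez (q e v) (q e' v)).

Definition is_root (v0 : T) : Prop :=
  [/\ v0 \in V,
      (forall e, e \in E -> v0 \in e -> q e v0 = 1) &
      (forall v, v \in V -> v != v0 -> forall p, path_between v0 v p ->
         (forall e, e \in E -> v \in e -> e \notin path_edges p -> 1 <= q e v) /\
         (#|[set e in E | (v \in e) && (e \notin path_edges p) && (q e v != 1)]|
            <= 1)%N)].

Definition decorated_rooted_tree (v0 : T) : Prop :=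
  decorated_tree /\ is_root v0.

Definition tree_lt (v0 x y : T) : Prop :=
  x != y /\ forall p, path_between v0 y p -> x \in p.

Definition negative_determinants : Prop :=
  forall x y, x \in V -> y \in V -> [set x; y] \in E -> det_edge x y < 0.

Definition positive_determinants : Prop :=
  forall x y, x \in V -> y \in V -> [set x; y] \in E -> det_edge x y > 0.

End DecoratedTrees.

(* Write gamma_{v,w} = (x_0, ..., x_n) with edges e_j = {x_j, x_(j+1)}, and put
   alpha_j = q(e_j, x_j), beta_j = q(e_j, x_(j+1)) and M_k = Q(gamma, x_k).  Along the
   path Q(e_j, x_j) = beta_(j-1) M_j and Q(e_j, x_(j+1)) = alpha_(j+1) M_(j+1) (M_0 and
   M_n at the two ends), while det(gamma) = alpha_0 beta_(n-1) - (M_1...M_(n-1))^2 M_0 M_n.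
   If v < w then gamma_{v,w} is a final segment of gamma_{v_0,w}, so the root condition
   makes every alpha_j and every M_k with k > 0 positive; multiplying the inequality for
   det(e_(j+1)) by these positive numbers then pushes the common sign of the edge
   determinants along the path to det(gamma).  Reversing the path does not change
   det(gamma), which settles the case w < v. *)

From HB Require Import structures.
From mathcomp Require Import all_boot all_order all_algebra.
From mathcomp Require Import zify ring.
Set Implicit Arguments. Unset Strict Implicit. Unset Printing Implicit Defensive.
Import Order.TTheory GRing.Theory Num.Theory.

Section Paths.
Variables (T : finType) (E : {set {set T}}).
Implicit Types (x y : T) (s p : seq T) (e : {set T}).

Lemma path_edges_cons2 x y s :
  path_edges [:: x, y & s] = [set x; y] :: path_edges (y :: s).
Proof. by []. Qed.

Lemma behead_path_edges x s : behead (path_edges (x :: s)) = path_edges s.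
Proof. by case: s. Qed.

Lemma size_path_edges p : size (path_edges p) = (size p).-1.
Proof. by rewrite size_map size_zip size_behead; lia. Qed.

Lemma nth_path_edges x0 p j : j.+1 < size p ->
  nth set0 (path_edges p) j = [set nth x0 p j; nth x0 p j.+1].
Proof.
elim: p j => [|x [|y s] IH] [|j] // lt_js.
by rewrite path_edges_cons2 /= IH.
Qed.

Lemma mem_path_edgesP x0 p e :
  reflect (exists2 j, j.+1 < size p & e = [set nth x0 p j; nth x0 p j.+1])
          (e \in path_edges p).
Proof.
apply: (iffP (nthP set0)) => [[j] | [j lt_jp ->]].
  rewrite size_path_edges => lt_jp <-.
  by exists j; rewrite ?(nth_path_edges x0) //; lia.
by exists j; rewrite ?size_path_edges ?(nth_path_edges x0) //; lia.
Qed.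

Lemma path_edges_take k p : path_edges (take k.+1 p) = take k (path_edges p).
Proof.
elim: k p => [|k IH] [|x [|y s]] //.
by rewrite /= path_edges_cons2 -IH.
Qed.

Lemma path_edges_drop k p : path_edges (drop k p) = drop k (path_edges p).
Proof.
elim: k p => [|k IH] [|x s]; rewrite ?drop0 //.
by rewrite /= IH -(behead_path_edges x) -drop1 drop_drop addn1.
Qed.

Lemma path_edges_rev p : path_edges (rev p) = rev (path_edges p).
Proof.
case: p => [//|x0 s]; set p := x0 :: s.
apply: (@eq_from_nth _ set0); first by rewrite size_rev !size_path_edges size_rev.
rewrite size_path_edges size_rev => j lt_jp.
rewrite nth_rev size_path_edges // !(nth_path_edges x0) ?size_rev //; last by lia.
rewrite !nth_rev; try lia; rewrite [LHS]setUC.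
by congr [set nth x0 p _; nth x0 p _]; lia.
Qed.

Lemma mem_path_edges_cell p e u : e \in path_edges p -> u \in e -> u \in p.
Proof.
case/(mem_path_edgesP u) => j lt_jp -> /set2P[] ->; apply: mem_nth => //; exact: ltnW.
Qed.

Lemma mem_path_edges_at x0 p k e : uniq p -> k < size p -> nth x0 p k \in e ->
  (e \in path_edges p) =
  (0 < k) && (e == [set nth x0 p k.-1; nth x0 p k])
  || (k.+1 < size p) && (e == [set nth x0 p k; nth x0 p k.+1]).
Proof.
move=> uniq_p lt_kp xk_e; apply/(mem_path_edgesP x0)/idP => [[j lt_jp def_e] | ].
  have lt_j := ltnW lt_jp.
  move: xk_e; rewrite def_e !inE !nth_uniq //.
  by case/orP=> /eqP ->; rewrite /= eqxx ?lt_jp ?orbT.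
case/orP=> /andP[lt_k /eqP ->]; last by exists k.
by exists k.-1; rewrite ?prednK //; lia.
Qed.

Lemma path_edge_in_E x0 p j : is_path E p -> j.+1 < size p ->
  [set nth x0 p j; nth x0 p j.+1] \in E.
Proof.
case=> _ [/allP edges_E _] lt_jp; apply: edges_E.
by apply/(mem_path_edgesP x0); exists j.
Qed.

Lemma is_path_take k p : is_path E p -> is_path E (take k.+1 p).
Proof.
case: p => [[]//|x s] [_ [edges_E uniq_edges]].
split; first by [].
rewrite path_edges_take take_uniq //; split=> //.
by apply/allP=> e /mem_take; apply: (allP edges_E).
Qed.

Lemma is_path_drop k p : k < size p -> is_path E p -> is_path E (drop k p).
Proof.
move=> lt_kp [_ [edges_E uniq_edges]].
split; first by move/(congr1 size)/eqP; rewrite size_drop subn_eq0 leqNgt lt_kp.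
rewrite path_edges_drop drop_uniq //; split=> //.
by apply/allP=> e /mem_drop; apply: (allP edges_E).
Qed.

Lemma path_between_take x y k p : k < size p -> path_between E x y p ->
  path_between E x (nth x p k) (take k.+1 p).
Proof.
move=> lt_kp [path_p [head_p _]]; split; first exact: is_path_take.
split; first by case: p lt_kp head_p {path_p}.
by rewrite -nth_last size_takel // nth_take.
Qed.

Lemma path_between_drop x y k p : k < size p -> path_between E x y p ->
  path_between E (nth x p k) y (drop k p).
Proof.
move=> lt_kp [path_p [_ last_p]]; split; first exact: is_path_drop.
have lt_last : (k + (size p - k).-1 < size p)%N by lia.
rewrite -nth0 -last_p -!nth_last !nth_drop addn0 size_drop !(set_nth_default x) //.
by split=> //; congr nth; lia.
Qed.

Lemma path_between_rev x y p : path_between E x y p -> path_between E y x (rev p).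
Proof.
case=> [[p_nonnil [edges_E uniq_edges]] [head_p last_p]]; split.
  split; first by move/(congr1 rev); rewrite revK.
  by rewrite path_edges_rev all_rev rev_uniq.
split; first by case/lastP: p p_nonnil last_p {edges_E uniq_edges head_p} => // s z _;
  rewrite rev_rcons last_rcons.
by case: p p_nonnil head_p {edges_E uniq_edges last_p} => // z s _; rewrite rev_cons last_rcons.
Qed.

Lemma path_edge_neq x0 p j : uniq p -> j.+2 < size p ->
  [set nth x0 p j; nth x0 p j.+1] != [set nth x0 p j.+1; nth x0 p j.+2].
Proof.
move=> uniq_p lt_jp; have lt_Sj := ltnW lt_jp; have lt_j := ltnW lt_Sj.
apply/eqP=> /setP/(_ (nth x0 p j)); rewrite !inE eqxx /= !nth_uniq //; lia.
Qed.

Lemma interior_nth x0 p :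
  interior p = [seq nth x0 p k | k <- index_iota 1 (size p).-1].
Proof. by rewrite /interior /index_iota map_nth_iota; [congr take; lia | lia]. Qed.

Lemma head_rev x s : head x (rev s) = last x s.
Proof. by case/lastP: s => [//|s y]; rewrite rev_rcons last_rcons. Qed.

Lemma last_rev x s : last x (rev s) = head x s.
Proof. by case: s => [//|y s]; rewrite rev_cons last_rcons. Qed.

Lemma interior_cons_rcons a b s : interior (a :: rcons s b) = s.
Proof. by rewrite /interior /= drop0 size_rcons !subSS subn0 -cats1 take_size_cat. Qed.

Lemma interior_rev p : interior (rev p) = rev (interior p).
Proof.
case: p => [//|a]; case/lastP=> [//|s b].
by rewrite rev_cons rev_rcons !interior_cons_rcons.
Qed.

Lemma path_between_size_gt1 x y p : path_between E x y p -> x != y -> 1 < size p.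
Proof. by case: p => [[[]]//|z [|z' s]] // [_ [/= <- <-]]; rewrite eqxx. Qed.

Section Trees.
Hypothesis tree_E : is_tree E.

Lemma tree_path_unique x y p1 p2 :
  path_between E x y p1 -> path_between E x y p2 -> p1 = p2.
Proof. by case: (tree_E x y) => p [_ unique_p] /unique_p <- /unique_p <-. Qed.

Lemma tree_path_uniq p : is_path E p -> uniq p.
Proof.
elim: p => [//|x s IH] path_xs /=; apply/andP; split; last first.
  by case: s IH path_xs => // y s IH path_xs; apply: IH; exact: (is_path_drop (k := 1) _ path_xs).
apply/negP=> x_in_s.
have xs_from_x : path_between E x (last x s) (x :: s) by [].
have := path_between_take (k := (index x s).+1) _ xs_from_x.
rewrite /= ltnS index_mem nth_index // => /(_ x_in_s) loop.
have trivial_loop : path_between E x x [:: x] by [].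
have := tree_path_unique loop trivial_loop.
by case: s x_in_s {IH path_xs xs_from_x loop}.
Qed.

End Trees.

End Paths.

Local Open Scope ring_scope.

Section DeterminantChain.
Variables (R : numDomainType) (n : nat) (alpha M : nat -> R).
Hypothesis n_gt0 : (0 < n)%N.
Hypothesis alpha_gt0 : forall j, (j < n)%N -> 0 < alpha j.
Hypothesis M_gt0 : forall k, (0 < k <= n)%N -> 0 < M k.

Lemma chain_det_lt0 (beta : nat -> R) (P : R) :
  (forall j, (j < n)%N ->
     alpha j * beta j - (if j == 0%N then P else beta j.-1 * M j)
       * (if j.+1 == n then M n else alpha j.+1 * M j.+1) < 0) ->
  alpha 0 * beta n.-1 - (\prod_(1 <= k < n) M k) ^+ 2 * P * M n < 0.
Proof.
move=> det_lt0.
pose U j := if j.+1 == n then M n else alpha j.+1 * M j.+1.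
have U_gt0 j : (j < n)%N -> 0 < U j.
  rewrite /U; case: eqP => [_ _|/eqP Sj_neq_n lt_jn]; first by apply: M_gt0; rewrite n_gt0 leqnn.
  by rewrite mulr_gt0 ?alpha_gt0 ?M_gt0 // ltn_neqAle Sj_neq_n.
(* [chain m] is the claim for the initial segment x_0, ..., x_(m+1), whose far end
   carries the weight Q(e_m, x_(m+1)) = [U m] instead of [M m.+1]. *)
suff chain m : (m < n)%N ->
    alpha 0 * beta m < (\prod_(1 <= k < m.+1) M k) ^+ 2 * P * U m.
  by rewrite subr_lt0; have := chain n.-1; rewrite /U prednK // eqxx; apply.
elim: m => [|m IH] lt_mn.
  by rewrite big_geq // expr1n mul1r -subr_lt0; apply: det_lt0.
have {IH} IH : alpha 0 * beta m < (\prod_(1 <= k < m.+1) M k) ^+ 2 * P * (alpha m.+1 * M m.+1).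
  by have := IH (ltnW lt_mn); rewrite /U ltn_eqF.
have step : alpha m.+1 * beta m.+1 < beta m * M m.+1 * U m.+1.
  by have := det_lt0 _ lt_mn; rewrite subr_lt0.
have MU_gt0 : 0 < M m.+1 * U m.+1.
  by apply: mulr_gt0; [apply: M_gt0; exact: ltnW | exact: U_gt0].
rewrite /= big_nat_recr //= -(ltr_pM2l (alpha_gt0 lt_mn)) mulrCA.
apply: (lt_trans (y := alpha 0 * (beta m * M m.+1 * U m.+1))).
  by rewrite ltr_pM2l ?alpha_gt0.
set X := \prod_(1 <= k < m.+1) M k.
have -> : alpha 0 * (beta m * M m.+1 * U m.+1) = alpha 0 * beta m * (M m.+1 * U m.+1) by ring.
have -> : alpha m.+1 * ((X * M m.+1) ^+ 2 * P * U m.+1)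
    = X ^+ 2 * P * (alpha m.+1 * M m.+1) * (M m.+1 * U m.+1) by ring.
by rewrite ltr_pM2r.
Qed.

Lemma chain_det_gt0 (beta : nat -> R) (P : R) :
  (forall j, (j < n)%N ->
     alpha j * beta j - (if j == 0%N then P else beta j.-1 * M j)
       * (if j.+1 == n then M n else alpha j.+1 * M j.+1) > 0) ->
  alpha 0 * beta n.-1 - (\prod_(1 <= k < n) M k) ^+ 2 * P * M n > 0.
Proof.
move=> det_gt0.
(* Replacing beta and P by their opposites flips the sign of every determinant. *)
have := chain_det_lt0 (beta := fun j => - beta j) (P := - P).
rewrite /= mulrN mulrN mulNr -opprD oppr_lt0; apply=> j lt_jn.
rewrite -oppr_gt0; apply: lt_le_trans (det_gt0 j lt_jn) _.
by case: (j == 0%N); rewrite /= le_eqVlt; apply/predU1P; left; ring.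
Qed.
End DeterminantChain.

Section PathDeterminant.
Variables (T : finType) (E : {set {set T}}) (q : {set T} -> T -> int).

Lemma Qe_eq_Qpath p e0 u :
  (forall e, e \in E -> u \in e -> (e \in path_edges p) = (e == e0)) ->
  Qe E q e0 u = Qpath E q p u.
Proof.
move=> edges_at_u; apply: eq_bigl => e.
by case: (boolP (e \in E)) => //= e_E; case: (boolP (u \in e)) => //= u_e; rewrite edges_at_u.
Qed.

Lemma Qe_eq_mul_Qpath p e0 e1 u : e1 \in E -> u \in e1 -> e1 != e0 ->
  (forall e, e \in E -> u \in e -> (e \in path_edges p) = (e == e0) || (e == e1)) ->
  Qe E q e0 u = q e1 u * Qpath E q p u.
Proof.
move=> e1_E u_e1 e1_neq edges_at_u; rewrite /Qe (bigD1 e1) /=; last by rewrite e1_E u_e1 e1_neq.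
congr (_ * _); apply: eq_bigl => e.
case: (boolP (e \in E)) => //= e_E; case: (boolP (u \in e)) => //= u_e.
by rewrite edges_at_u // negb_or.
Qed.

Lemma Qpath_rev p u : Qpath E q (rev p) u = Qpath E q p u.
Proof. by apply: eq_bigl => e; rewrite path_edges_rev mem_rev. Qed.

Lemma Qstar_rev p : Qstar E q (rev p) = Qstar E q p.
Proof. by rewrite /Qstar interior_rev big_rev; apply: eq_bigr => u _; rewrite Qpath_rev. Qed.

Lemma det_path_cons_rcons x0 a b s :
  det_path E q x0 (a :: rcons s b) =
  q [set a; head b s] a * q [set last a s; b] b
  - Qstar E q (a :: rcons s b) ^+ 2 * Qpath E q (a :: rcons s b) a
    * Qpath E q (a :: rcons s b) b.
Proof.
rewrite /det_path /= size_rcons /=.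
have -> : nth x0 (rcons s b) 0 = head b s by case: s.
have -> : nth x0 (rcons s b) (size s) = b by rewrite nth_rcons ltnn eqxx.
by rewrite -rcons_cons nth_rcons /= ltnSn (last_nth x0).
Qed.

Lemma det_path_rev x0 y0 p : (1 < size p)%N -> det_path E q x0 p = det_path E q y0 (rev p).
Proof.
case: p => [//|a]; case/lastP=> [//|s b] _.
have rev_p : rev (a :: rcons s b) = b :: rcons (rev s) a by rewrite rev_cons rev_rcons.
rewrite rev_p !det_path_cons_rcons -rev_p Qstar_rev !Qpath_rev head_rev last_rev.
by rewrite [[set b; _]]setUC [[set head b s; a]]setUC; ring.
Qed.

Variables (x0 : T) (p : seq T).
Hypotheses (path_p : is_path E p) (uniq_p : uniq p).

Local Notation n := (size p).-1.
Local Notation cell k := (nth x0 p k).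
Local Notation edge j := [set cell j; cell j.+1].
Local Notation alpha j := (q (edge j) (cell j)).
Local Notation beta j := (q (edge j) (cell j.+1)).
Local Notation Qcell k := (Qpath E q p (cell k)).

Lemma Qe_edge_start j : (j < n)%N ->
  Qe E q (edge j) (cell j) = if j == 0%N then Qcell 0 else beta j.-1 * Qcell j.
Proof.
case: j => [|j] lt_jn /=.
  apply: Qe_eq_Qpath => e _ e_x0; rewrite (mem_path_edges_at uniq_p _ e_x0) /=; last by lia.
  by have -> : (1 < size p)%N by lia.
apply: Qe_eq_mul_Qpath; rewrite ?path_edge_in_E ?path_edge_neq ?inE ?eqxx ?orbT //; try lia.
move=> e _ e_x; rewrite (mem_path_edges_at uniq_p _ e_x) /=; last by lia.
have -> : (j.+2 < size p)%N by lia.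
by rewrite orbC.
Qed.

Lemma Qe_edge_end j : (j < n)%N ->
  Qe E q (edge j) (cell j.+1) = if j.+1 == n then Qcell n else alpha j.+1 * Qcell j.+1.
Proof.
move=> lt_jn; case: eqP => [Sj_eq_n | /eqP Sj_neq_n].
  rewrite -Sj_eq_n; apply: Qe_eq_Qpath => e _ e_x.
  rewrite (mem_path_edges_at uniq_p _ e_x) /=; last by lia.
  have -> : (j.+2 < size p)%N = false by lia.
  by rewrite orbF.
apply: Qe_eq_mul_Qpath;
  rewrite ?path_edge_in_E ?inE ?eqxx ?orbT 1?eq_sym ?path_edge_neq //; try lia.
move=> e _ e_x; rewrite (mem_path_edges_at uniq_p _ e_x) /=; last by lia.
by have -> : (j.+2 < size p)%N by lia.
Qed.

Lemma det_edge_path j : (j < n)%N ->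
  det_edge E q (cell j) (cell j.+1) =
  alpha j * beta j - (if j == 0%N then Qcell 0 else beta j.-1 * Qcell j)
                     * (if j.+1 == n then Qcell n else alpha j.+1 * Qcell j.+1).
Proof. by move=> lt_jn; rewrite /det_edge Qe_edge_start // Qe_edge_end. Qed.

Lemma det_path_cells : (0 < n)%N ->
  det_path E q x0 p = alpha 0 * beta n.-1 - (\prod_(1 <= k < n) Qcell k) ^+ 2 * Qcell 0 * Qcell n.
Proof. by move=> n_gt0; rewrite /det_path /Qstar (interior_nth x0) big_map prednK. Qed.

Lemma det_path_lt0 : (0 < n)%N ->
  (forall j, (j < n)%N -> 0 < alpha j) -> (forall k, (0 < k <= n)%N -> 0 < Qcell k) ->
  (forall j, (j < n)%N -> det_edge E q (cell j) (cell j.+1) < 0) ->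
  det_path E q x0 p < 0.
Proof.
move=> n_gt0 alpha_gt0 Q_gt0 det_lt0; rewrite det_path_cells //.
apply: (@chain_det_lt0 _ _ (fun j => alpha j) (fun k => Qcell k) n_gt0 alpha_gt0 Q_gt0
  (fun j => beta j)) => j lt_jn.
by rewrite -det_edge_path ?det_lt0.
Qed.

Lemma det_path_gt0 : (0 < n)%N ->
  (forall j, (j < n)%N -> 0 < alpha j) -> (forall k, (0 < k <= n)%N -> 0 < Qcell k) ->
  (forall j, (j < n)%N -> det_edge E q (cell j) (cell j.+1) > 0) ->
  det_path E q x0 p > 0.
Proof.
move=> n_gt0 alpha_gt0 Q_gt0 det_gt0; rewrite det_path_cells //.
apply: (@chain_det_gt0 _ _ (fun j => alpha j) (fun k => Qcell k) n_gt0 alpha_gt0 Q_gt0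
  (fun j => beta j)) => j lt_jn.
by rewrite -det_edge_path ?det_gt0.
Qed.

End PathDeterminant.

Section RootedTree.
Variables (T : finType) (V A : {set T}) (E : {set {set T}}) (q : {set T} -> T -> int).
Variable v0 : T.
Hypothesis rooted : decorated_rooted_tree E q V A v0.

Let tree_E : is_tree E. Proof. by case: rooted => [[_ [_ [_ []]]]]. Qed.

Lemma root_path_q_ge1 u g e : path_between E v0 u g ->
  e \in E -> u \in e -> e \notin path_edges g -> 1 <= q e u.
Proof.
case: rooted => [[_ [cover_VA [_ [_ [_ [q_arrow _]]]]]] [_ q_root root_V]] g_path e_E u_e e_off.
have [u_eq|u_neq_v0] := eqVneq u v0; first by rewrite u_eq q_root ?lexx -?u_eq.
have : u \in V :|: A by rewrite cover_VA inE.
case/setUP=> [u_V | u_A]; last by rewrite q_arrow ?lexx.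
by have [q_ge1 _] := root_V u u_V u_neq_v0 g g_path; apply: q_ge1.
Qed.

Lemma root_path_edge_q_gt0 x0 y g i : path_between E v0 y g -> (i.+1 < size g)%N ->
  0 < q [set nth x0 g i; nth x0 g i.+1] (nth x0 g i).
Proof.
move=> g_path lt_ig; have lt_i := ltnW lt_ig.
have uniq_g := tree_path_uniq tree_E g_path.1.
rewrite (set_nth_default v0 x0 lt_i) (set_nth_default v0 x0 lt_ig).
apply: lt_le_trans ltr01 (root_path_q_ge1 (path_between_take lt_i g_path) _ _ _).
- exact: path_edge_in_E g_path.1 lt_ig.
- by rewrite !inE eqxx.
apply/negP=> /mem_path_edges_cell in_prefix.
have /index_ltn : nth v0 g i.+1 \in take i.+1 g by apply: in_prefix; rewrite !inE eqxx orbT.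
by rewrite index_uniq // ltnn.
Qed.

Lemma root_path_Qpath_gt0 x0 y g m i : path_between E v0 y g ->
  (m < i)%N -> (i < size g)%N -> 0 < Qpath E q (drop m g) (nth x0 g i).
Proof.
move=> g_path lt_mi lt_ig; rewrite (set_nth_default v0 x0 lt_ig).
have uniq_prefix : uniq (take i.+1 g) by rewrite take_uniq // (tree_path_uniq tree_E g_path.1).
apply: prodr_gt0 => e /andP[e_E /andP[gi_e e_off]].
apply: lt_le_trans ltr01 (root_path_q_ge1 (path_between_take lt_ig g_path) e_E gi_e _).
apply: contra e_off.
have gi_e' : nth v0 (take i.+1 g) i \in e by rewrite nth_take.
rewrite (mem_path_edges_at uniq_prefix _ gi_e') size_takel // ltnn andFb orbF.
rewrite !nth_take //; last by lia.
case/andP=> i_gt0 /eqP ->; apply/(mem_path_edgesP v0); exists (i.-1 - m)%N.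
  by rewrite size_drop; lia.
by rewrite !nth_drop; congr [set nth v0 g _; nth v0 g _]; lia.
Qed.

Lemma path_cell_in_V x y p k : path_between E x y p -> x \in V -> y \in V ->
  (k < size p)%N -> nth x p k \in V.
Proof.
case: rooted => [[_ [cover_VA [_ [_ [arrow_one _]]]]] _] p_path x_V y_V lt_kp.
have [k_last | k_inner] := eqVneq k (size p).-1.
  by rewrite k_last nth_last p_path.2.2.
case: k lt_kp k_inner => [|j] lt_kp k_inner; first by rewrite nth0 p_path.2.1.
have : nth x p j.+1 \in V :|: A by rewrite cover_VA inE.
case/setUP=> // x_A; have lt_jp : (j.+2 < size p)%N by lia.
have lt_Sjp := ltnW lt_jp.
have two_edges : [set [set nth x p j; nth x p j.+1]; [set nth x p j.+1; nth x p j.+2]]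
    \subset [set e in E | nth x p j.+1 \in e].
  by apply/subsetP=> e /set2P[] ->; rewrite inE !inE eqxx ?orbT andbT (path_edge_in_E _ p_path.1).
move/subset_leq_card: two_edges.
by rewrite cards2 path_edge_neq ?(tree_path_uniq tree_E p_path.1) // arrow_one.
Qed.

Lemma tree_lt_det_path_sign v w p : v \in V -> w \in V -> tree_lt E v0 v w ->
  path_between E v w p ->
  (negative_determinants E q V -> det_path E q v p < 0) /\
  (positive_determinants E q V -> det_path E q v p > 0).
Proof.
move=> v_V w_V [v_neq_w v_below_w] p_path.
have [g [g_path _]] := tree_E v0 w.
have v_g := v_below_w g g_path; set m := index v g.
have lt_mg : (m < size g)%N by rewrite index_mem.
have suffix_path : path_between E v w (drop m g).
  by rewrite -{1}(nth_index v0 v_g); apply: path_between_drop.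
have def_p := tree_path_unique tree_E p_path suffix_path.
have size_p : size p = (size g - m)%N by rewrite def_p size_drop.
have cell_p k : nth v p k = nth v g (m + k) by rewrite def_p nth_drop.
have n_gt0 : (0 < (size p).-1)%N by have := path_between_size_gt1 p_path v_neq_w; lia.
have alpha_gt0 j : (j < (size p).-1)%N ->
    0 < q [set nth v p j; nth v p j.+1] (nth v p j).
  by move=> lt_jn; rewrite !cell_p addnS; apply: root_path_edge_q_gt0 g_path _; lia.
have Q_gt0 k : (0 < k <= (size p).-1)%N -> 0 < Qpath E q p (nth v p k).
  by move=> /andP[k_gt0 le_kn]; rewrite cell_p {1}def_p; apply: root_path_Qpath_gt0 g_path _ _; lia.
have cell_V k : (k <= (size p).-1)%N -> nth v p k \in V.
  by move=> le_kn; apply: path_cell_in_V p_path v_V w_V _; lia.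
have edge_E j : (j < (size p).-1)%N -> [set nth v p j; nth v p j.+1] \in E.
  by move=> lt_jn; apply: (path_edge_in_E _ p_path.1); lia.
have uniq_p := tree_path_uniq tree_E p_path.1.
split=> [neg_det | pos_det].
  apply: (det_path_lt0 p_path.1 uniq_p) => // j lt_jn.
  by apply: neg_det; [apply: cell_V | apply: cell_V | apply: edge_E]; lia.
apply: (det_path_gt0 p_path.1 uniq_p) => // j lt_jn.
by apply: pos_det; [apply: cell_V | apply: cell_V | apply: edge_E]; lia.
Qed.

End RootedTree.

Theorem proposition5p7 (T : finType) (V A : {set T}) (E : {set {set T}})
  (f : T -> int) (q : {set T} -> T -> int) (v0 : T) (v w : T) :
  decorated_rooted_tree E q V A v0 ->
  v \in V -> w \in V ->
  tree_lt E v0 v w \/ tree_lt E v0 w v ->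
  (negative_determinants E q V ->
     forall p, path_between E v w p -> det_path E q v p < 0) /\
  (positive_determinants E q V ->
     forall p, path_between E v w p -> det_path E q v p > 0).
Proof.
move=> rooted v_V w_V [v_below_w | w_below_v]; split=> signs p p_path.
- exact: (tree_lt_det_path_sign rooted v_V w_V v_below_w p_path).1 signs.
- exact: (tree_lt_det_path_sign rooted v_V w_V v_below_w p_path).2 signs.
all: have v_neq_w : v != w by rewrite eq_sym; case: w_below_v.
all: rewrite (det_path_rev _ _ _ w (path_between_size_gt1 p_path v_neq_w)).
- exact: (tree_lt_det_path_sign rooted w_V v_V w_below_v (path_between_rev p_path)).1 signs.
- exact: (tree_lt_det_path_sign rooted w_V v_V w_below_v (path_between_rev p_path)).2 signs.
Qed.
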